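(* There exists an absolute constant $\alpha_0>0$ such that for every $T>0$, every $\alpha>\alpha_0/\sqrt{T}$ and every $t\in[0,T]$, \[ \lim_{n\to\infty}\mathbb P\Big(\sup_{1\le j\le n}\sup_{s\le t}\big|\dot{\tilde\beta}^n_j(s)\big|\ge \alpha n^{1/2}2^{n/2}\Big)=\lim_{n\to\infty}\mathbb P\Big(\sup_{s\le t}\big|\dot{\widetilde W}^n(s)\big|_{H_0}\ge \alpha\, n\, 2^{n/2}\Big)=0 . \]
   Context: Let $H$ be a separable Hilbert space with norm $|\cdot|$, $Q$ a positive trace-class operator on $H$ with orthonormal eigenbasis $(e_j)_{j\ge1}$, $Qe_j=q_je_j$. Let $H_0=Q^{1/2}H$ with norm $|\phi|_{H_0}=|Q^{-1/2}\phi|$. Let $(\beta_j)_{j\ge1}$ be independent standard real Brownian motions on a probability space $(\Omega,\mathcal F,\mathbb P)$. Fix $T>0$. For integers $n\ge1$ and $k=0,\dots,2^n$ put $t_k=kT2^{-n}$, and for $s\in[t_k,t_{k+1})$ set $\underline s_n=t_k$ and $s_n=t_{k-1}\vee0$ (with $t_{-1}:=0$). Define $\dot{\tilde\beta}^n_j(s)=T^{-1}2^n\big(\beta_j(\underline s_n)-\beta_j(s_n)\big)$ for $s\in[0,T]$, and $\dot{\widetilde W}^n(s)=\sum_{1\le j\le n}\dot{\tilde\beta}^n_j(s)\,q_j^{1/2}e_j$ (an $H_0$-valued process). *)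

From HB Require Import structures.
From mathcomp Require Import all_boot all_order all_algebra.
From mathcomp Require Import all_classical all_reals all_analysis.
Set Implicit Arguments. Unset Strict Implicit. Unset Printing Implicit Defensive.
Import Order.TTheory GRing.Theory Num.Theory.
Import numFieldNormedType.Exports.
Local Open Scope classical_set_scope.
Local Open Scope ring_scope.

Section defs.
Context {R : realType} {d : measure_display} {Omega : measurableType d}.
Variable P : probability Omega R.

Definition mutually_independent (I : Type) (D : set I)
    (F : I -> set (set Omega)) : Prop :=
  forall (m : nat) (idx : 'I_m -> I), injective idx -> (forall k, D (idx k)) ->
  forall A : 'I_m -> set Omega, (forall k, F (idx k) (A k)) ->
  P (\bigcap_(k in [set: 'I_m]) A k) = (\prod_(k < m) P (A k))%E.

Definition sigma_rv (X : Omega -> R) : set (set Omega) :=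
  preimage_set_system setT X measurable.

Definition sigma_proc (X : R -> Omega -> R) : set (set Omega) :=
  <<s \bigcup_(t in [set t : R | 0 <= t]) sigma_rv (X t) >>.

Definition standard_BM (B : R -> Omega -> R) : Prop :=
  [/\ (forall t, 0 <= t -> measurable_fun setT (B t)),
      {ae P, forall w, B 0 w = 0},
      (forall s t, 0 <= s -> s < t -> forall A : set R, measurable A ->
         P ((fun w => B t w - B s w) @^-1` A) = normal_prob 0 (Num.sqrt (t - s)) A),
      (forall (m : nat) (tm : 'I_m.+1 -> R),
         (forall k, 0 <= tm k) -> (forall k l : 'I_m.+1, (k <= l)%N -> tm k <= tm l) ->
         mutually_independent [set: 'I_m]
           (fun k => sigma_rv (fun w => B (tm (lift ord0 k)) w
                                        - B (tm (widen_ord (leqnSn m) k)) w)))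
    & {ae P, forall w, {within [set t : R | 0 <= t], continuous (fun t => B t w)}}].

Definition indep_std_BMs (beta : nat -> R -> Omega -> R) : Prop :=
  (forall j, (1 <= j)%N -> standard_BM (beta j)) /\
  mutually_independent [set j | (1 <= j)%N] (fun j => sigma_proc (beta j)).

End defs.

Section grid.
Context {R : realType}.

(** for s in [t_k, t_{k+1}), t_k = k T 2^-n :  underline s_n = t_k *)
Definition grid_lo (T : R) (n : nat) (s : R) : R :=
  (Num.floor (s * 2 ^+ n / T))%:~R * (T / 2 ^+ n).

Definition grid_prev (T : R) (n : nat) (s : R) : R :=
  Num.max (grid_lo T n s - T / 2 ^+ n) 0.

Definition tbeta_dot {Omega : Type} (beta : nat -> R -> Omega -> R)
    (T : R) (n j : nat) (s : R) (w : Omega) : R :=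
  (2 ^+ n / T) * (beta j (grid_lo T n s) w - beta j (grid_prev T n s) w).

End grid.

Section hilbert.
Context {R : realType} {V : lmodType R}.

Definition inner_product (ip : V -> V -> R) : Prop :=
  [/\ (forall x y, ip x y = ip y x),
      (forall (a : R) x y z, ip (a *: x + y) z = a * ip x z + ip y z),
      (forall x, 0 <= ip x x) & (forall x, ip x x = 0 -> x = 0)].

Definition ip_norm (ip : V -> V -> R) (x : V) : R := Num.sqrt (ip x x).

Definition orthonormal_basis (ip : V -> V -> R) (e : nat -> V) : Prop :=
  (forall j k, (1 <= j)%N -> (1 <= k)%N -> ip (e j) (e k) = (j == k)%:R) /\
  (forall x, (forall j, (1 <= j)%N -> ip x (e j) = 0) -> x = 0).

Definition linear_op (A : V -> V) : Prop :=
  forall (a : R) x y, A (a *: x + y) = a *: A x + A y.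

Definition selfadjoint_pos (ip : V -> V -> R) (A : V -> V) : Prop :=
  linear_op A /\ (forall x y, ip (A x) y = ip x (A y)) /\ (forall x, 0 <= ip (A x) x).

Definition trace_class_eigen (ip : V -> V -> R) (Q : V -> V) (e : nat -> V)
    (q : nat -> R) : Prop :=
  [/\ selfadjoint_pos ip Q, orthonormal_basis ip e,
      (forall j, (1 <= j)%N -> 0 < q j /\ Q (e j) = q j *: e j)
    & cvg (series (fun j => q j.+1) @ \oo)].

Definition is_sqrt_op (ip : V -> V -> R) (Q S : V -> V) : Prop :=
  selfadjoint_pos ip S /\ (forall x, S (S x) = Q x).

(** |phi|_{H_0} = |Q^{-1/2} phi| (+oo if phi is not in H_0 = Q^{1/2} H) *)
Definition H0_norm (ip : V -> V -> R) (sqrtQ : V -> V) (phi : V) : \bar R :=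
  ereal_inf [set (ip_norm ip psi)%:E | psi in [set psi | sqrtQ psi = phi]].

Definition Wdot {Omega : Type} (beta : nat -> R -> Omega -> R) (T : R)
    (e : nat -> V) (q : nat -> R) (n : nat) (s : R) (w : Omega) : V :=
  \sum_(1 <= j < n.+1) tbeta_dot beta T n j s w *: (Num.sqrt (q j) *: e j).

End hilbert.

(* On the cell [[t_k, t_{k+1})] of the dyadic grid, [tbeta_dot] is the rescaled
   Brownian increment [2^n/T (beta_j(t_k) - beta_j(t_{k-1}))] (or 0 on the first
   cell), a centred Gaussian of variance [2^n/T].  In the eigenbasis of [Q],
   [|Wdot^n(s)|_{H_0}] is the Euclidean norm of the [n] increments on the cell of
   [s], so it exceeds [alpha n 2^(n/2)] only if one of them exceeds
   [alpha (n 2^n)^(1/2)].  The Gaussian tail bound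
   [P(|X| >= a) <= sqrt 2 exp(-a^2 / (4 Var X))] and a union bound over the
   [n 2^n] increments bound both probabilities by
   [n 2^n sqrt 2 exp(-alpha^2 T n / 4)], which is [O(1/n)] once
   [alpha^2 T > 36]: hence [alpha_0 = 6]. *)

From HB Require Import structures.
From mathcomp Require Import all_boot all_order all_algebra.
From mathcomp Require Import all_classical all_reals all_analysis.
From mathcomp Require Import measurable_realfun ring lra zify.
Import Order.TTheory GRing.Theory Num.Theory.
Import numFieldNormedType.Exports.
Set Implicit Arguments. Unset Strict Implicit. Unset Printing Implicit Defensive.
Local Open Scope classical_set_scope.
Local Open Scope ring_scope.

Section gaussian_tail.
Variable R : realType.

Lemma measurable_abs_ge (a : R) : measurable [set x : R | a <= `|x|].
Proof.
have := normr_measurable measurableT (measurable_itv `[a, +oo[).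
by rewrite setTI; congr measurable; apply/seteqP; split => x; rewrite /= in_itv /= andbT.
Qed.

Lemma normal_peak_sqrt2 (s : R) :
  normal_peak s = Num.sqrt 2 * normal_peak (Num.sqrt 2 * s).
Proof.
rewrite /normal_peak exprMn sqr_sqrtr ?ler0n//.
have -> : 2 * s ^+ 2 * pi *+ 2 = 2 * (s ^+ 2 * pi *+ 2) by rewrite -mulrA mulrnAr.
by rewrite (sqrtrM _ (ler0n _ 2)) invfM mulrA divff ?mul1r.
Qed.

(* On [a <= |x|], half of the Gaussian exponent is at most [-a^2/(4 s^2)]; the
   other half is the exponent of the Gaussian of variance [2 s^2]. *)
Lemma normal_pdf_abs_ge_le (s a x : R) : 0 < s -> 0 <= a -> a <= `|x| ->
  normal_pdf 0 s x <= Num.sqrt 2 * expR (- (a ^+ 2) / (s ^+ 2 *+ 4))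
                       * normal_pdf 0 (Num.sqrt 2 * s) x.
Proof.
move=> s0 a0 ax.
have s2 : 0 < s ^+ 2 by rewrite exprn_gt0.
have ax2 : a ^+ 2 <= x ^+ 2.
  by rewrite -(real_normK (num_real x)) lerXn2r ?nnegrE ?normr_ge0.
rewrite !normal_pdfE ?mulf_neq0 ?gt_eqF ?sqrtr_gt0 ?ltr0n// /normal_fun subr0.
rewrite normal_peak_sqrt2 [leRHS]mulrACA ler_wpM2l ?mulr_ge0 ?sqrtr_ge0 ?normal_peak_ge0//.
rewrite -expRD ler_expR exprMn sqr_sqrtr ?ler0n// -subr_ge0.
have -> : - (a ^+ 2) / (s ^+ 2 *+ 4) + - (x ^+ 2) / (2 * s ^+ 2 *+ 2)
          - - (x ^+ 2) / (s ^+ 2 *+ 2) = (x ^+ 2 - a ^+ 2) / (s ^+ 2 *+ 4).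
  by field; rewrite ?pmulrn_lneq0 ?mulf_neq0 ?gt_eqF ?ltr0n.
by rewrite divr_ge0 ?subr_ge0 ?pmulrn_rge0 // ltW.
Qed.

Lemma normal_prob_abs_ge_le (s a : R) : 0 < s -> 0 <= a ->
  (normal_prob 0 s [set x | (a <= `|x|)%R] <=
     (Num.sqrt 2 * expR (- (a ^+ 2) / (s ^+ 2 *+ 4)))%:E)%E.
Proof.
move=> s0 a0; set A := [set x | a <= `|x|]; set C := Num.sqrt 2 * _.
have mA : measurable A by exact: measurable_abs_ge.
have C0 : 0 <= C by rewrite mulr_ge0 ?sqrtr_ge0 ?expR_ge0.
have pdf_ge0 (s' x : R) : (0 <= (normal_pdf 0 s' x)%:E)%E by rewrite lee_fin normal_pdf_ge0.
apply: (@le_trans _ _ (\int[lebesgue_measure]_(x in A)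
                         (C%:E * (normal_pdf 0 (Num.sqrt 2 * s) x)%:E))%E).
  apply: ge0_le_integral => //.
  - by apply/measurable_EFinP; apply: measurable_funTS; exact: measurable_normal_pdf.
  - apply/measurable_funeM/measurable_EFinP/measurable_funTS.
    exact: measurable_normal_pdf.
  - by move=> x ax; rewrite -EFinM lee_fin normal_pdf_abs_ge_le.
rewrite ge0_integralZl_EFin//; last first.
  by apply/measurable_EFinP; apply: measurable_funTS; exact: measurable_normal_pdf.
rewrite -[leRHS]mule1 lee_wpmul2l ?lee_fin//.
rewrite -(integral_normal_pdf 0 (Num.sqrt 2 * s)).
apply: ge0_subset_integral => //.
by apply/measurable_EFinP; exact: measurable_normal_pdf.
Qed.

End gaussian_tail.

Section grid_cells.
Context {R : realType} {Omega : Type}.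
Variables (beta : nat -> R -> Omega -> R) (T : R).
Hypothesis T_gt0 : 0 < T.

Definition grid_index (n : nat) (s : R) : nat := `|Num.floor (s * 2 ^+ n / T)|%N.

Definition tbeta_cell (n j k : nat) (w : Omega) : R :=
  (2 ^+ n / T) * (beta j (k%:R * (T / 2 ^+ n)) w
                  - beta j (Num.max (k%:R * (T / 2 ^+ n) - T / 2 ^+ n) 0) w).

Definition incr_rate (B : R -> Omega -> R) (n k : nat) (w : Omega) : R :=
  (2 ^+ n / T) * (B (k.+1%:R * (T / 2 ^+ n)) w - B (k%:R * (T / 2 ^+ n)) w).

Lemma grid_indexE n (s : R) : 0 <= s ->
  (grid_index n s)%:R = (Num.floor (s * 2 ^+ n / T))%:~R :> R.
Proof.
move=> s0; rewrite /grid_index natr_absz ger0_norm // floor_ge0.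
by rewrite divr_ge0 ?mulr_ge0 ?exprn_ge0 // ltW.
Qed.

Lemma tbeta_dotE n j (s : R) w : 0 <= s ->
  tbeta_dot beta T n j s w = tbeta_cell n j (grid_index n s) w.
Proof. by move=> s0; rewrite /tbeta_dot /tbeta_cell /grid_prev /grid_lo grid_indexE. Qed.

Lemma grid_index_le n (s : R) : 0 <= s -> s <= T -> (grid_index n s <= 2 ^ n)%N.
Proof.
move=> s0 sT; rewrite -(ler_nat R) grid_indexE// natrX.
apply: (le_trans (floor_le _)).
by rewrite ler_pdivrMr// mulrC ler_wpM2l ?exprn_ge0.
Qed.

Lemma tbeta_cell0 n j w : tbeta_cell n j 0 w = 0.
Proof.
rewrite /tbeta_cell mul0r sub0r max_r ?subrr ?mulr0// oppr_le0.
by rewrite divr_ge0 ?exprn_ge0 // ltW.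
Qed.

Lemma tbeta_cellS n j k w : tbeta_cell n j k.+1 w = incr_rate (beta j) n k w.
Proof.
rewrite /tbeta_cell (_ : k.+1%:R * _ - _ = k%:R * (T / 2 ^+ n)); last first.
  by rewrite -natr1 mulrDl mul1r addrK.
by rewrite max_l// mulr_ge0 ?divr_ge0 ?exprn_ge0 // ltW.
Qed.

Definition grid_range (n : nat) (t : R) : set nat :=
  [set k | exists2 s, 0 <= s <= t & grid_index n s = k].

Lemma grid_range_le n (t : R) k : t <= T -> grid_range n t k -> (k <= 2 ^ n)%N.
Proof. by move=> tT [s /andP[s0 st] <-]; rewrite grid_index_le // (le_trans st). Qed.

Lemma finite_grid_range n (t : R) : t <= T -> finite_set (grid_range n t).
Proof.
move=> tT; apply: (@sub_finite_set _ _ `I_(2 ^ n).+1); last exact: finite_II.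
by move=> k /(grid_range_le tT); rewrite /= ltnS.
Qed.

(* Makes a supremum over [s] in [[0, t]] a supremum over finitely many cells. *)
Lemma image_grid_range (U : Type) (F : R -> U) (G : nat -> U) n (t : R) :
  (forall s, 0 <= s -> F s = G (grid_index n s)) ->
  [set F s | s in [set s | 0 <= s <= t]] = [set G k | k in grid_range n t].
Proof.
move=> FG; apply/seteqP; split => x /=.
  move=> [s st <-]; exists (grid_index n s); first by exists s.
  by rewrite FG //; case/andP: st.
by move=> [k [s st <-] <-]; exists s => //; rewrite FG //; case/andP: st.
Qed.

End grid_cells.

Lemma measurable_ge_fun {R : realType} d (Omega : measurableType d)
    (f : Omega -> R) (c : R) :
  measurable_fun setT f -> measurable [set w | c <= f w].
Proof.
move=> mf; have := mf measurableT _ (measurable_itv `[c, +oo[).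
by rewrite setTI; congr measurable; apply/seteqP; split => x; rewrite /= in_itv /= andbT.
Qed.

Section brownian_increments.
Context {R : realType} {d : measure_display} {Omega : measurableType d}.
Variables (P : probability Omega R) (T : R).
Hypothesis T_gt0 : 0 < T.

Lemma measurable_incr_rate (B : R -> Omega -> R) n k :
  standard_BM P B -> measurable_fun setT (incr_rate T B n k).
Proof.
move=> [Bm _ _ _ _]; apply: measurable_funM; first exact: measurable_cst.
by apply: measurable_funB; apply: Bm; rewrite mulr_ge0 ?divr_ge0 ?exprn_ge0 // ltW.
Qed.

Lemma incr_rate_tail (B : R -> Omega -> R) n k (c : R) : standard_BM P B -> 0 < c ->
  (P [set w | (c <= `|incr_rate T B n k w|)%R] <=
     (Num.sqrt 2 * expR (- (c ^+ 2 * (T / 2 ^+ n) / 4)))%:E)%E.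
Proof.
move=> BM c0; have [Bm _ Binc _ _] := BM.
have h0 : 0 < T / 2 ^+ n by rewrite divr_gt0 ?exprn_gt0.
set h := T / 2 ^+ n in h0 *; set t1 := k.+1%:R * h; set t0 := k%:R * h.
have incrE : [set w | c <= `|incr_rate T B n k w|] =
    (fun w => B t1 w - B t0 w) @^-1` [set x | c * h <= `|x|].
  have key y : (c <= `|2 ^+ n / T * y|) = (c * h <= `|y|).
    by rewrite -(invf_div T) normrM gtr0_norm ?invr_gt0 // mulrC ler_pdivlMr.
  by apply/seteqP; split => w /=; rewrite key.
rewrite incrE Binc ?mulr_ge0 ?ltr_pM2r ?ltr_nat ?ler0n //; last 2 first.
- exact: ltW.
- exact: measurable_abs_ge.
have -> : t1 - t0 = h by rewrite /t1 /t0 -natr1 mulrDl mul1r addrAC subrr add0r.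
apply: le_trans (normal_prob_abs_ge_le _ _) _.
- by rewrite sqrtr_gt0.
- by rewrite mulr_ge0 // ltW.
rewrite sqr_sqrtr; last exact: ltW.
by have -> : - (c * h) ^+ 2 / (h *+ 4) = - (c ^+ 2 * h / 4) by field; rewrite gt_eqF.
Qed.

Variable beta : nat -> R -> Omega -> R.
Hypothesis beta_BM : indep_std_BMs P beta.

Lemma beta_std_BM j : (1 <= j)%N -> standard_BM P (beta j).
Proof. by case: beta_BM => BM _; exact: BM. Qed.

Lemma measurable_tbeta_cell n j k :
  (1 <= j)%N -> measurable_fun setT (tbeta_cell beta T n j k).
Proof.
move=> j1; have [Bm _ _ _ _] := beta_std_BM j1.
have h0 : 0 <= T / 2 ^+ n by rewrite divr_ge0 ?exprn_ge0 // ltW.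
apply: measurable_funM; first exact: measurable_cst.
by apply: measurable_funB; apply: Bm; [rewrite mulr_ge0 | rewrite le_max lexx orbT].
Qed.

Definition rate_exceedance (c : R) (n : nat) : set Omega :=
  \bigcup_(j < n) \bigcup_(k < 2 ^ n) [set w | c <= `|incr_rate T (beta j.+1) n k w|].

Lemma rate_exceedance_bound (c : R) n : 0 < c -> measurable (rate_exceedance c n) /\
  (P (rate_exceedance c n) <= ((n * 2 ^ n)%N%:R *
     (Num.sqrt 2 * expR (- (c ^+ 2 * (T / 2 ^+ n) / 4))))%:E)%E.
Proof.
move=> c0; set b := Num.sqrt 2 * _.
pose E j k := [set w | c <= `|incr_rate T (beta j.+1) n k w|].
pose F j := \big[setU/set0]_(k < 2 ^ n) E j k.
have mE j k : measurable (E j k).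
  exact/measurable_ge_fun/measurableT_comp/measurable_incr_rate/beta_std_BM.
have mF j : measurable (F j) by apply: bigsetU_measurable => k _; exact: mE.
have UF : rate_exceedance c n = \big[setU/set0]_(j < n) F j.
  by rewrite /rate_exceedance -bigcup_mkord; apply: eq_bigcupr => j _; rewrite bigcup_mkord.
have sum_const (m : nat) (x : R) : (\sum_(k < m) x%:E = (m%:R * x)%:E)%E.
  by rewrite sumEFin sumr_const card_ord mulr_natl.
have mU : measurable (\big[setU/set0]_(j < n) F j).
  by apply: bigsetU_measurable => j _; exact: mF.
rewrite UF; split => //.
apply: (le_trans (@content_subadditive _ _ _ P _ F n (fun j _ => mF j) mU (@subset_refl _ _))).
apply: (@le_trans _ _ (\sum_(j < n) ((2 ^ n)%N%:R * b)%:E)%E).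
  apply: lee_sum => j _; rewrite -sum_const.
  apply: (le_trans (@content_subadditive _ _ _ P _ (E j) (2 ^ n)%N
                      (fun k _ => mE j k) (mF j) (@subset_refl _ _))).
  by apply: lee_sum => k _; exact/incr_rate_tail/c0/beta_std_BM.
by rewrite sum_const natrM mulrA.
Qed.

Lemma tbeta_cell_sub_exceedance (c : R) n j k : 0 < c -> (1 <= j <= n)%N -> (k <= 2 ^ n)%N ->
  [set w | c <= `|tbeta_cell beta T n j k w|] `<=` rate_exceedance c n.
Proof.
case: j => // j c0 /= jn; case: k => [_ w /=|k kn w /=].
  by rewrite tbeta_cell0 // normr0 => /(lt_le_trans c0); rewrite ltxx.
by rewrite tbeta_cellS // => cX; exists j => //; exists k.
Qed.

End brownian_increments.

Section linear_op.
Context {R : realType} {V : lmodType R} (S : V -> V).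
Hypothesis S_lin : linear_op S.

Lemma linear_opD x y : S (x + y) = S x + S y.
Proof. by have := S_lin 1 x y; rewrite !scale1r. Qed.

Lemma linear_op0 : S 0 = 0.
Proof. by apply: (@addrI _ (S 0)); rewrite -linear_opD !addr0. Qed.

Lemma linear_opZ a x : S (a *: x) = a *: S x.
Proof. by have := S_lin a x 0; rewrite !addr0 linear_op0 addr0. Qed.

Lemma linear_opB x y : S (x - y) = S x - S y.
Proof. by rewrite linear_opD -scaleN1r linear_opZ scaleN1r. Qed.

Lemma linear_op_sum (I : Type) (r : seq I) (P : pred I) (F : I -> V) :
  S (\sum_(i <- r | P i) F i) = \sum_(i <- r | P i) S (F i).
Proof. exact: (big_morph S linear_opD linear_op0). Qed.

End linear_op.

Section inner_product.
Context {R : realType} {V : lmodType R} (ip : V -> V -> R).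
Hypothesis ip_inner : inner_product ip.

Lemma ipDl x y z : ip (x + y) z = ip x z + ip y z.
Proof. by case: ip_inner => _ ipL _ _; rewrite -[x]scale1r ipL mul1r scale1r. Qed.

Lemma ip0l z : ip 0 z = 0.
Proof. by apply: (@addrI _ (ip 0 z)); rewrite -ipDl !addr0. Qed.

Lemma ipZl a x z : ip (a *: x) z = a * ip x z.
Proof. by case: ip_inner => _ ipL _ _; rewrite -[a *: x]addr0 ipL ip0l addr0. Qed.

Lemma ipZr a x z : ip x (a *: z) = a * ip x z.
Proof. by case: ip_inner => ipC _ _ _; rewrite ipC ipZl ipC. Qed.

Lemma ip_suml (I : Type) (r : seq I) (P : pred I) (F : I -> V) z :
  ip (\sum_(i <- r | P i) F i) z = \sum_(i <- r | P i) ip (F i) z.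
Proof. exact: (big_morph (fun x => ip x z) (fun x y => ipDl x y z) (ip0l z)). Qed.

Lemma ip_orthonormal_sum (e : nat -> V) (a : nat -> R) n :
  (forall j k, (1 <= j)%N -> (1 <= k)%N -> ip (e j) (e k) = (j == k)%:R) ->
  ip (\sum_(j < n) a j.+1 *: e j.+1) (\sum_(j < n) a j.+1 *: e j.+1)
  = \sum_(j < n) a j.+1 ^+ 2.
Proof.
move=> e_on; rewrite ip_suml; apply: eq_bigr => j _.
rewrite ipZl; case: ip_inner => ipC _ _ _; rewrite ipC ip_suml (bigD1 j) //=.
rewrite ipZl e_on // eqxx mulr1 big1 ?addr0 ?expr2 // => k kj.
by rewrite ipZl e_on // eqSS (inj_eq val_inj) (negbTE kj) mulr0.
Qed.

(* With [r := sqrt q] and [y := S v - r v] one gets [S y + r y = 0], whence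
   [<S y, y> + r <y, y> = 0] with both terms nonnegative by positivity of [S]. *)
Lemma sqrt_op_eigen (Q S : V -> V) (v : V) (q : R) :
  is_sqrt_op ip Q S -> 0 < q -> Q v = q *: v -> S v = Num.sqrt q *: v.
Proof.
move=> [[S_lin [_ S_pos]] SS] q0 Qv.
have r0 : 0 < Num.sqrt q by rewrite sqrtr_gt0.
set y := S v - Num.sqrt q *: v.
have Sy : S y + Num.sqrt q *: y = 0.
  rewrite /y (linear_opB S_lin) (linear_opZ S_lin) SS Qv scalerBr scalerA -expr2.
  by rewrite sqr_sqrtr ?ltW // addrA subrK subrr.
have : ip (S y + Num.sqrt q *: y) y = 0 by rewrite Sy ip0l.
case: ip_inner => _ _ ip_pos ip_def; rewrite ipDl ipZl => /eqP.
rewrite paddr_eq0; last 2 first; [exact: S_pos | exact: mulr_ge0 (ltW r0) (ip_pos y) |].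
rewrite mulf_eq0 (gt_eqF r0) /=.
by move=> /andP[_ /eqP /ip_def y0]; apply/eqP; rewrite -subr_eq0 -/y y0.
Qed.

Lemma trace_class_eigen_eq0 (Q : V -> V) (e : nat -> V) (q : nat -> R) x :
  trace_class_eigen ip Q e q -> Q x = 0 -> x = 0.
Proof.
move=> [[_ [Q_sym _]] [_ e_total] Q_eigen _] Qx.
apply: e_total => j j1; have [qj Qe] := Q_eigen j j1.
have /eqP : ip (Q x) (e j) = 0 by rewrite Qx ip0l.
by rewrite Q_sym Qe ipZr mulf_eq0 (gt_eqF qj) => /eqP.
Qed.

Lemma sqrt_op_inj (Q S : V -> V) (e : nat -> V) (q : nat -> R) :
  trace_class_eigen ip Q e q -> is_sqrt_op ip Q S -> injective S.
Proof.
move=> Q_tc [[S_lin _] SS] x y Sxy; apply/eqP; rewrite -subr_eq0; apply/eqP.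
by apply: (trace_class_eigen_eq0 Q_tc); rewrite -SS (linear_opB S_lin) Sxy subrr (linear_op0 S_lin).
Qed.

Lemma H0_norm_sqrt_op (Q S : V -> V) (e : nat -> V) (q : nat -> R) psi :
  trace_class_eigen ip Q e q -> is_sqrt_op ip Q S ->
  H0_norm ip S (S psi) = (ip_norm ip psi)%:E.
Proof.
move=> Q_tc S_sqrt; rewrite /H0_norm -[RHS]ereal_inf1; congr ereal_inf.
apply/seteqP; split => x /=.
  by move=> [p /= /(sqrt_op_inj Q_tc S_sqrt) -> <-].
by move=> ->; exists psi.
Qed.

Lemma H0_norm_eigen_sum (Q S : V -> V) (e : nat -> V) (q : nat -> R) (a : nat -> R) n :
  trace_class_eigen ip Q e q -> is_sqrt_op ip Q S ->
  H0_norm ip S (\sum_(j < n) a j.+1 *: (Num.sqrt (q j.+1) *: e j.+1))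
  = (Num.sqrt (\sum_(j < n) a j.+1 ^+ 2))%:E.
Proof.
move=> Q_tc S_sqrt; have [_ [e_on _] Q_eigen _] := Q_tc.
have [[S_lin _] _] := S_sqrt.
have -> : \sum_(j < n) a j.+1 *: (Num.sqrt (q j.+1) *: e j.+1)
          = S (\sum_(j < n) a j.+1 *: e j.+1).
  rewrite (linear_op_sum S_lin); apply: eq_bigr => j _.
  have [qj Qe] := Q_eigen j.+1 isT.
  by rewrite (linear_opZ S_lin) (sqrt_op_eigen S_sqrt qj Qe).
by rewrite (H0_norm_sqrt_op _ Q_tc S_sqrt) /ip_norm ip_orthonormal_sum.
Qed.

End inner_product.

Section finite_sup.
Context {R : realType}.

Lemma ub_lt_seq (I : eqType) (g : I -> R) (c : R) (l : seq I) :
  (forall i, i \in l -> g i < c) -> exists2 m, m < c & forall i, i \in l -> g i <= m.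
Proof.
elim: l => [|x l IH] glc; first by exists (c - 1) => //; rewrite ltrBlDr ltrDl ltr01.
have [m mc gm] : exists2 m, m < c & forall i, i \in l -> g i <= m.
  by apply: IH => i il; apply: glc; rewrite in_cons il orbT.
exists (Num.max (g x) m); first by rewrite gt_max mc glc ?mem_head.
move=> i; rewrite in_cons => /orP[/eqP -> | il]; first by rewrite le_max lexx.
by rewrite le_max gm ?orbT.
Qed.

Lemma ereal_sup_finite_geP (I : eqType) (D : set I) (g : I -> R) (c : R) :
  finite_set D ->
  (c%:E <= ereal_sup [set (g i)%:E | i in D])%E <-> exists2 i, D i & c <= g i.
Proof.
move=> D_fin; split => [|[i Di ci]]; last first.
  apply: (le_trans _ (ereal_sup_ubound _)); last by exists i.
  exact: ci.
move: D_fin => /finite_seqP[s ->] c_le; apply: contrapT => no_i.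
have [|m mc gm] := @ub_lt_seq _ g c s.
  by move=> i si; rewrite ltNge; apply/negP => ci; apply: no_i; exists i.
have : (ereal_sup [set (g i)%:E | i in [set` s]] <= m%:E)%E.
  by apply: ge_ereal_sup => _ [i /= si <-]; rewrite lee_fin gm.
by move=> /(le_trans c_le); rewrite lee_fin => /(lt_le_trans mc); rewrite ltxx.
Qed.

Lemma sqrt_sum_sqr_ge (n : nat) (a : 'I_n -> R) (c : R) : (0 < n)%N -> 0 <= c ->
  Num.sqrt n%:R * c <= Num.sqrt (\sum_(j < n) a j ^+ 2) -> exists j, c <= `|a j|.
Proof.
move=> n0 c0 c_le.
have S0 : 0 <= \sum_(j < n) a j ^+ 2 by apply: sumr_ge0 => j _; exact: sqr_ge0.
have : n%:R * c ^+ 2 <= \sum_(j < n) a j ^+ 2.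
  rewrite -(sqr_sqrtr S0) -[n%:R](@sqr_sqrtr _ n%:R) ?ler0n // -exprMn.
  by rewrite lerXn2r ?nnegrE ?mulr_ge0 ?sqrtr_ge0.
have -> : n%:R * c ^+ 2 = \sum_(j < n) c ^+ 2 by rewrite sumr_const card_ord mulr_natl.
apply: contraPP => no_j; apply/negP; rewrite -ltNge.
apply: ltr_sum; first by apply/hasP; exists (Ordinal n0); rewrite ?mem_index_enum.
move=> j _; rewrite -real_normK ?num_real // ltrXn2r ?nnegrE ?normr_ge0 //.
by rewrite ltNge; apply/negP => cj; apply: no_j; exists j.
Qed.

End finite_sup.

Lemma finite_index_set (n : nat) : finite_set [set j : nat | (1 <= j <= n)%N].
Proof.
apply: (sub_finite_set _ (finite_II n.+1)) => j /andP[_ jn].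
by rewrite /= ltnS.
Qed.

Section sup_events.
Context {R : realType} {d : measure_display} {Omega : measurableType d}.
Variables (P : probability Omega R) (beta : nat -> R -> Omega -> R) (T : R).
Hypotheses (T_gt0 : 0 < T) (beta_BM : indep_std_BMs P beta).

Definition tbeta_sup_event (c t : R) (n : nat) : set Omega :=
  [set w | (c%:E <= ereal_sup (\bigcup_(j in [set j : nat | (1 <= j <= n)%N])
     [set (`|tbeta_dot beta T n j s w|)%:E | s in [set s : R | (0 <= s <= t)%R]]))%E].

Lemma tbeta_sup_eventE (c t : R) n : t <= T ->
  tbeta_sup_event c t n = \bigcup_(i in [set j : nat | (1 <= j <= n)%N] `*` grid_range T n t)
                             [set w | c <= `|tbeta_cell beta T n i.1 i.2 w|].
Proof.
move=> tT; have D_fin := finite_setX (finite_index_set n) (finite_grid_range T_gt0 n tT).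
have supE w : \bigcup_(j in [set j : nat | (1 <= j <= n)%N])
     [set (`|tbeta_dot beta T n j s w|)%:E | s in [set s : R | (0 <= s <= t)%R]]
   = [set (`|tbeta_cell beta T n i.1 i.2 w|)%:E
        | i in [set j : nat | (1 <= j <= n)%N] `*` grid_range T n t].
  apply/seteqP; split => x /=.
    move=> [j Jj]; rewrite (@image_grid_range _ T _ _ (fun k => (`|tbeta_cell beta T n j k w|)%:E) n).
      by move=> [k Kk <-]; exists (j, k).
    by move=> s s0; rewrite tbeta_dotE.
  move=> [[j k] [/= Jj [s st <-]] <-]; exists j => //; exists s => //.
  by rewrite tbeta_dotE //; case/andP: st.
apply/seteqP; split => w; rewrite /tbeta_sup_event /= supE.
  by move/(ereal_sup_finite_geP _ _ D_fin).
by move=> [i Di ci]; apply/(ereal_sup_finite_geP _ _ D_fin); exists i.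
Qed.

Lemma tbeta_sup_event_sub (c t : R) n : 0 < c -> t <= T ->
  measurable (tbeta_sup_event c t n) /\
  tbeta_sup_event c t n `<=` rate_exceedance T beta c n.
Proof.
move=> c0 tT; rewrite tbeta_sup_eventE //; split.
  apply: fin_bigcup_measurable => [|[j k] /= [/andP[j1 _] _]].
    exact: finite_setX (finite_index_set n) (finite_grid_range T_gt0 n tT).
  apply: measurable_ge_fun.
  exact: measurableT_comp (@normr_measurable R setT) (measurable_tbeta_cell T_gt0 beta_BM n k j1).
move=> w [[j k] /= [Jj /(grid_range_le T_gt0 tT) kn]].
exact: tbeta_cell_sub_exceedance.
Qed.

Variables (V : lmodType R) (ip : V -> V -> R) (Q sqrtQ : V -> V) (e : nat -> V) (q : nat -> R).
Hypotheses (ip_inner : inner_product ip) (Q_tc : trace_class_eigen ip Q e q)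
  (sqrtQ_sqrt : is_sqrt_op ip Q sqrtQ).

Definition Wdot_sup_event (x t : R) (n : nat) : set Omega :=
  [set w | (x%:E <= ereal_sup [set H0_norm ip sqrtQ (Wdot beta T e q n s w)
                              | s in [set s : R | (0 <= s <= t)%R]])%E].

Lemma H0_norm_Wdot n (s : R) w : 0 <= s ->
  H0_norm ip sqrtQ (Wdot beta T e q n s w)
  = (Num.sqrt (\sum_(j < n) tbeta_cell beta T n j.+1 (grid_index T n s) w ^+ 2))%:E.
Proof.
move=> s0; rewrite /Wdot big_add1 big_mkord.
under eq_bigr do rewrite tbeta_dotE //.
exact: (H0_norm_eigen_sum ip_inner (fun j => tbeta_cell beta T n j (grid_index T n s) w)
          n Q_tc sqrtQ_sqrt).
Qed.

Lemma Wdot_sup_event_sub (c t : R) n : (0 < n)%N -> 0 < c -> t <= T ->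
  measurable (Wdot_sup_event (Num.sqrt n%:R * c) t n) /\
  Wdot_sup_event (Num.sqrt n%:R * c) t n `<=` rate_exceedance T beta c n.
Proof.
move=> n0 c0 tT; set x := Num.sqrt n%:R * c.
pose N k w := Num.sqrt (\sum_(j < n) tbeta_cell beta T n j.+1 k w ^+ 2).
have K_fin := finite_grid_range T_gt0 n tT.
have imgE w : [set H0_norm ip sqrtQ (Wdot beta T e q n s w) | s in [set s : R | 0 <= s <= t]]
            = [set (N k w)%:E | k in grid_range T n t].
  by apply: image_grid_range => s s0; exact: H0_norm_Wdot.
have eventE : Wdot_sup_event x t n = \bigcup_(k in grid_range T n t) [set w | x <= N k w].
  apply/seteqP; split => w; rewrite /Wdot_sup_event /= imgE.
    by move/(ereal_sup_finite_geP _ _ K_fin).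
  by move=> [k Kk xk]; apply/(ereal_sup_finite_geP _ _ K_fin); exists k.
rewrite eventE; split.
  apply: fin_bigcup_measurable => // k _.
  have x0 : 0 <= x by rewrite mulr_ge0 ?sqrtr_ge0 ?ltW.
  have -> : [set w | x <= N k w]
            = [set w | x ^+ 2 <= \sum_(j < n) tbeta_cell beta T n j.+1 k w ^+ 2].
    have NE w : (x <= N k w) = (x ^+ 2 <= \sum_(j < n) tbeta_cell beta T n j.+1 k w ^+ 2).
      rewrite /N -[X in X <= _](ger0_norm x0) -sqrtr_sqr ler_sqrt //.
      by apply: sumr_ge0 => j _; exact: sqr_ge0.
    by apply/seteqP; split => w /=; rewrite NE.
  apply/measurable_ge_fun/measurable_sum => j.
  exact/measurable_funX/(measurable_tbeta_cell T_gt0 beta_BM n k (ltn0Sn j)).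
move=> w [k /(grid_range_le T_gt0 tT) kn /= /(sqrt_sum_sqr_ge n0 (ltW c0)) [j cj]].
exact: (tbeta_cell_sub_exceedance T_gt0 c0 (ltn_ord j : (0 < j.+1 <= n)%N) kn cj).
Qed.

End sup_events.

Lemma leq_mul_exp2_exp10 n : (n * n.+1 * 2 ^ n <= 10 ^ n)%N.
Proof.
elim: n => // n IH; rewrite !expnS; case: n IH => [|n] // IH.
move: IH; set X := (2 ^ n.+1)%N; set Y := (10 ^ n.+1)%N => IH; nia.
Qed.

Section limit.
Context {R : realType}.

(* For [K > 36], [expR (- K n / 4) <= 10 ^- n] absorbs the [n 2^n] events of the
   union bound, with a factor [n + 1] to spare. *)
Lemma union_bound_le_harmonic (K : R) n : 36 < K ->
  (n * 2 ^ n)%N%:R * (Num.sqrt 2 * expR (- (K * n%:R / 4))) <= Num.sqrt 2 * n.+1%:R^-1.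
Proof.
move=> K36; rewrite mulrCA ler_wpM2l ?sqrtr_ge0 //.
have exp_le : expR (- (K * n%:R / 4)) <= (10%:R ^+ n)^-1.
  apply: (@le_trans _ _ (expR (- (n%:R * 9)))).
    by rewrite ler_expR lerN2 (mulrC K) -mulrA ler_wpM2l ?ler0n //; lra.
  rewrite expRN expRM_natl lef_pV2 ?posrE ?exprn_gt0 ?expR_gt0 ?ltr0n //.
  rewrite lerXn2r ?nnegrE ?ler0n ?expR_ge0 //.
  by have := expR_ge1Dx (9 : R); lra.
apply: (le_trans (ler_wpM2l (ler0n _ _) exp_le)).
rewrite ler_pdivrMr ?exprn_gt0 ?ltr0n // [leRHS]mulrC ler_pdivlMr ?ltr0n //.
by rewrite -natrX -!natrM ler_nat mulnAC leq_mul_exp2_exp10.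
Qed.

Lemma prob_cvg0_dominated d (Omega : measurableType d) (P : probability Omega R)
    (A B : nat -> set Omega) (b : nat -> R) :
  (\forall n \near \oo,
     [/\ measurable (A n), measurable (B n), A n `<=` B n & (P (B n) <= (b n)%:E)%E]) ->
  b @ \oo --> 0 -> (fun n => P (A n)) @ \oo --> 0%E.
Proof.
move=> AB b0; apply: (@squeeze_cvge _ _ _ _ (fun=> 0%E) _ (fun n => (b n)%:E)).
- apply: filterS AB => n [mA mB ABn PB].
  by rewrite measure_ge0 /= (le_trans _ PB) // le_measure ?inE.
- exact: cvg_cst.
- by apply: cvg_EFin => //; exact: nearW.
Qed.

End limit.

Section exceedance_limit.
Context {R : realType} {d : measure_display} {Omega : measurableType d}.
Variables (P : probability Omega R) (beta : nat -> R -> Omega -> R) (T alpha : R).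
Hypotheses (T_gt0 : 0 < T) (beta_BM : indep_std_BMs P beta) (alpha_gt0 : 0 < alpha).

Definition threshold (n : nat) : R := alpha * Num.sqrt n%:R * Num.sqrt (2 ^+ n).

Lemma threshold_gt0 n : (0 < n)%N -> 0 < threshold n.
Proof. by move=> n0; rewrite !mulr_gt0 ?sqrtr_gt0 ?ltr0n ?exprn_gt0. Qed.

Lemma rate_exceedance_threshold_le n : 36 < alpha ^+ 2 * T -> (0 < n)%N ->
  measurable (rate_exceedance T beta (threshold n) n) /\
  (P (rate_exceedance T beta (threshold n) n) <= (Num.sqrt 2 * n.+1%:R^-1)%:E)%E.
Proof.
move=> K36 n0; have [mU PU] := rate_exceedance_bound T_gt0 beta_BM n (threshold_gt0 n0).
split=> //; apply: (le_trans PU); rewrite lee_fin.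
have -> : threshold n ^+ 2 * (T / 2 ^+ n) / 4 = alpha ^+ 2 * T * n%:R / 4.
  rewrite /threshold !exprMn !sqr_sqrtr ?ler0n ?exprn_ge0 //.
  by field; rewrite expf_neq0 // pnatr_eq0.
exact: union_bound_le_harmonic.
Qed.

End exceedance_limit.

Theorem lemma2p1 :
  exists alpha0 : rat, 0 < alpha0 /\
  forall (R : realType) (d : measure_display) (Omega : measurableType d)
    (P : probability Omega R) (beta : nat -> R -> Omega -> R)
    (V : lmodType R) (ip : V -> V -> R) (Q sqrtQ : V -> V)
    (e : nat -> V) (q : nat -> R) (T alpha t : R),
    indep_std_BMs P beta ->
    inner_product ip -> trace_class_eigen ip Q e q -> is_sqrt_op ip Q sqrtQ ->
    0 < T -> ratr alpha0 / Num.sqrt T < alpha -> 0 <= t <= T ->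
    ((fun n : nat => P [set w | (ereal_sup
         (\bigcup_(j in [set j : nat | (1 <= j <= n)%N])
            [set (`|tbeta_dot beta T n j s w|)%:E | s in [set s : R | (0 <= s <= t)%R]])
         >= (alpha * Num.sqrt n%:R * Num.sqrt (2 ^+ n))%:E)%E]) @ \oo --> 0%E)
    /\
    ((fun n : nat => P [set w | (ereal_sup
         [set H0_norm ip sqrtQ (Wdot beta T e q n s w) | s in [set s : R | (0 <= s <= t)%R]]
         >= (alpha * n%:R * Num.sqrt (2 ^+ n))%:E)%E]) @ \oo --> 0%E).
Proof.
exists 6%:R; split; first by rewrite ltr0n.
move=> R d Omega P beta V ip Q sqrtQ e q T alpha t beta_BM ip_inner Q_tc sqrtQ_sqrt
  T_gt0 alpha_gt /andP[_ tT].
rewrite ratr_nat in alpha_gt.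
have alpha_gt0 : 0 < alpha by apply: lt_trans alpha_gt; rewrite divr_gt0 ?sqrtr_gt0 ?ltr0n.
have K36 : 36 < alpha ^+ 2 * T.
  have h6 : 6 < alpha * Num.sqrt T by rewrite -ltr_pdivrMr ?sqrtr_gt0.
  have : 6 ^+ 2 < (alpha * Num.sqrt T) ^+ 2 by rewrite ltrXn2r ?ler0n.
  by rewrite exprMn sqr_sqrtr ?ltW // expr2; lra.
have harmonic : (fun n => Num.sqrt 2 * n.+1%:R^-1) @ \oo --> (0 : R).
  by rewrite -(mulr0 (Num.sqrt 2)); exact: cvgMl_tmp cvg_harmonic.
split; apply: (prob_cvg0_dominated
  (B := fun n => rate_exceedance T beta (threshold alpha n) n) _ harmonic).
all: near=> n; have n0 : (0 < n)%N by near: n; exact: nbhs_infty_gt.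
all: have [mB PB] := rate_exceedance_threshold_le T_gt0 beta_BM alpha_gt0 K36 n0.
- have [mA AB] := tbeta_sup_event_sub T_gt0 beta_BM n (threshold_gt0 alpha_gt0 n0) tT.
  by split.
- have [mA AB] := Wdot_sup_event_sub T_gt0 beta_BM ip_inner Q_tc sqrtQ_sqrt
                    n0 (threshold_gt0 alpha_gt0 n0) tT.
  have -> : alpha * n%:R * Num.sqrt (2 ^+ n) = Num.sqrt n%:R * threshold alpha n.
    have sqrt_n : Num.sqrt n%:R * Num.sqrt n%:R = n%:R :> R.
      by rewrite -expr2 sqr_sqrtr ?ler0n.
    by rewrite /threshold -{1}sqrt_n; ring.
  by split.
Unshelve. all: by end_near.
Qed.
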